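(* Let the qubit HQMM be defined as follows. For each time $m\ge 0$, the hidden spaces are $\mathcal{H}_m\simeq\mathbb{C}^2$ with computational basis $\{|0\rangle_m,|1\rangle_m\}$ and the output space is $\mathcal{K}_m\simeq\mathbb{C}^2$ with orthonormal basis $\{|e_0\rangle_m,|e_1\rangle_m\}$. Let $U=\exp(-\mathrm{i}\tfrac{\theta}{2}\sigma_x)=\cos(\tfrac{\theta}{2})\mathbb{I}-\mathrm{i}\sin(\tfrac{\theta}{2})\sigma_x$ with $0<|\theta|<\pi$. The hidden transition expectation is $\mathcal{E}_{H;m}(X)=V_{H;m}^{*}XV_{H;m}$ for $X\in\mathcal{B}(\mathcal{H}_m\otimes\mathcal{H}_{m+1})$, with isometry $V_{H;m}|\psi\rangle_m=U|\psi\rangle_m\otimes|0\rangle_{m+1}$; the emission expectation is $\mathcal{E}_{H,O;m}(Y)=V_{H,O;m}^{*}YV_{H,O;m}$ for $Y\in\mathcal{B}(\mathcal{H}_m\otimes\mathcal{K}_m)$, with isometry $V_{H,O;m}|0\rangle_m=|0\rangle_m\otimes|e_0\rangle_m$, $V_{H,O;m}|1\rangle_m=|1\rangle_m\otimes|e_1\rangle_m$. The conventional block maps are $\mathcal{F}^{(m)}_{a_m,b_m}(X)=\mathcal{E}_{H;m}\bigl(\mathcal{E}_{H,O;m}(a_m\otimes b_m)\otimes X\bigr)$ and the causal block maps are $\mathcal{G}^{(m)}_{a_m,b_m}(X)=\mathcal{E}_{H,O;m}\bigl(\mathcal{E}_{H;m}(a_m\otimes X)\otimes b_m\bigr)$,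 for $a_m\in\mathcal{B}(\mathcal{H}_m)$, $b_m\in\mathcal{B}(\mathcal{K}_m)$, $X\in\mathcal{B}(\mathcal{H}_{m+1})$. Let the initial hidden state be $\phi_{H,0}(X)=\operatorname{Tr}(\rho_{H;0}X)$ with $\rho_{H;0}=|0\rangle_0\langle 0|$, and define the conventional and causal HQMM cylinder states by $\varphi_{H,O}\bigl(\bigotimes_{m=0}^n(a_m\otimes b_m)\bigr)=\phi_{H,0}\circ\mathcal{F}^{(0)}_{a_0,b_0}\circ\cdots\circ\mathcal{F}^{(n)}_{a_n,b_n}(\mathbb{I}_{H;n+1})$ and $\psi_{H,O}\bigl(\bigotimes_{m=0}^n(a_m\otimes b_m)\bigr)=\phi_{H,0}\circ\mathcal{G}^{(0)}_{a_0,b_0}\circ\cdots\circ\mathcal{G}^{(n)}_{a_n,b_n}(\mathbb{I}_{H;n+1})$. For the effect sequence \[ (a_0,b_0)=(\mathbb{I}_{\mathcal{H}_0},|e_0\rangle_0\langle e_0|), \qquad (a_m,b_m)=(\mathbb{I}_{\mathcal{H}_m},\mathbb{I}_{\mathcal{K}_m})\;\text{for all }m\ge 1, \] the conventional and causal HQMM cylinder states $\varphi_{H,O}$ and $\psi_{H,O}$ are different. In particular, there exists $n\ge 0$ and an event in the cylinder effect algebra for which the two probability assignments do not coincide.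
   Context: Hidden quantum Markov models (HQMMs) built from completely positive unital transition expectations $\mathcal{E}_{H;m}:\mathcal{B}(\mathcal{H}_m)\otimes\mathcal{B}(\mathcal{H}_{m+1})\to\mathcal{B}(\mathcal{H}_m)$ and emission expectations $\mathcal{E}_{H,O;m}:\mathcal{B}(\mathcal{H}_m)\otimes\mathcal{B}(\mathcal{K}_m)\to\mathcal{B}(\mathcal{H}_m)$, composed either in the conventional (emission–then–transition) order or the causal (transition–then–emission) order; the finite-time functionals extend to states on the quasi-local algebra $\bigotimes_{m\in\mathbb{N}}\mathcal{B}(\mathcal{H}_m)\otimes\mathcal{B}(\mathcal{K}_m)$. *)

From HB Require Import structures.
From mathcomp Require Import all_boot all_order all_algebra.
From mathcomp Require Import reals trigo.
From mathcomp Require Import complex mxtens.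
Set Implicit Arguments. Unset Strict Implicit. Unset Printing Implicit Defensive.
Import Order.TTheory GRing.Theory Num.Theory.
Local Open Scope ring_scope.
Local Open Scope complex_scope.

Section QubitHQMM.
Variable R : realType.
Local Notation C := (complex R).
Local Notation M2 := 'M[C]_2.

Definition adjmx (m n : nat) (A : 'M[C]_(m, n)) : 'M[C]_(n, m) :=
  map_mx Num.conj A^T.

Definition sigma_x : M2 := \matrix_(i, j) (if i == j then 0 else 1).

(* U = exp(-i theta/2 sigma_x) = cos(theta/2) I - i sin(theta/2) sigma_x *)
Definition Uth (theta : R) : M2 :=
  (cos (theta / 2))%:C *: 1%:M - ('i * (sin (theta / 2))%:C) *: sigma_x.

Definition ket0 : 'M[C]_(2, 1) := delta_mx 0 0.

Definition V_H (theta : R) : 'M[C]_(2 * 2, 2) := Uth theta *t ket0.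

(* V_{H,O;m} |i> = |i> (x) |e_i>,  i = 0, 1 *)
Definition V_HO : 'M[C]_(2 * 2, 2) :=
  \matrix_(k, l) (if k == mxtens_index (l, l) then 1 else 0).

Definition E_H (theta : R) (X : 'M[C]_(2 * 2)) : M2 :=
  adjmx (V_H theta) *m X *m V_H theta.

Definition E_HO (Y : 'M[C]_(2 * 2)) : M2 := adjmx V_HO *m Y *m V_HO.

Definition Fblock (theta : R) (a b X : M2) : M2 :=
  E_H theta (E_HO (a *t b) *t X).

Definition Gblock (theta : R) (a b X : M2) : M2 :=
  E_HO (E_H theta (a *t X) *t b).

Fixpoint compose_blocks (blk : M2 -> M2 -> M2 -> M2) (a b : nat -> M2)
    (m k : nat) : M2 :=
  match k with
  | 0 => blk (a m) (b m) 1%:M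
  | k'.+1 => blk (a m) (b m) (compose_blocks blk a b m.+1 k')
  end.

Definition rho_H0 : M2 := delta_mx 0 0.
Definition phi_H0 (X : M2) : C := \tr (rho_H0 *m X).

Definition varphi_HO (theta : R) (a b : nat -> M2) (n : nat) : C :=
  phi_H0 (compose_blocks (Fblock theta) a b 0 n).

Definition psi_HO (theta : R) (a b : nat -> M2) (n : nat) : C :=
  phi_H0 (compose_blocks (Gblock theta) a b 0 n).

Definition eff_a (m : nat) : M2 := 1%:M.
Definition eff_b (m : nat) : M2 := if m == 0%N then delta_mx 0 0 else 1%:M.

End QubitHQMM.

From HB Require Import structures.
From mathcomp Require Import all_boot all_order all_algebra.
From mathcomp Require Import reals trigo.
From mathcomp Require Import complex mxtens.
From mathcomp Require Import lra.
Import Order.TTheory GRing.Theory Num.Theory.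
Local Open Scope ring_scope.

(* Both expectations are compressions by isometries, and on elementary tensors
   they act in closed form: the emission expectation takes the entrywise
   product of the two factors, and the transition expectation conjugates the
   first factor by U and weighs it with the (0,0) entry of the second one.  At
   n = 0 the conventional state is therefore |U_00|^2 and the causal state is
   (U^* U)_00 = |U_00|^2 + |U_10|^2; they differ by |U_10|^2 = sin^2(theta/2),
   which is non-zero for 0 < |theta| < pi. *)

Lemma sin_neq0 (R : realType) (x : R) : 0 < `|x| < pi -> sin x != 0.
Proof.
case/andP=> x_gt0 x_ltpi; rewrite (numEsg x) sin_sg mulf_neq0 //.
  by rewrite sgr_eq0 -normr_gt0.
by rewrite gt_eqF // sin_gt0_pi // x_gt0 x_ltpi.
Qed.

Lemma mxtrace_delta_mul (R : pzRingType) n (i j : 'I_n) (X : 'M[R]_n) :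
  \tr (delta_mx i j *m X) = X j i.
Proof.
rewrite /mxtrace (bigD1 i) //= big1 => [|k /negbTE ki].
  rewrite addr0 mxE (bigD1 j) //= big1 => [|l /negbTE lj].
    by rewrite mxE !eqxx mul1r addr0.
  by rewrite mxE lj andbF mul0r.
by rewrite mxE big1 // => l _; rewrite mxE ki mul0r.
Qed.

Section QubitHQMM.
Variable R : realType.
Local Notation C := (complex R).
Local Open Scope complex_scope.

Lemma adjmx_tens {m n p q} (A : 'M[C]_(m, n)) (B : 'M[C]_(p, q)) :
  adjmx (A *t B) = adjmx A *t adjmx B.
Proof. by rewrite /adjmx trmx_tens map_mxT. Qed.

Lemma adjmx_delta m n (i : 'I_m) (j : 'I_n) :
  adjmx (delta_mx i j : 'M[C]_(m, n)) = delta_mx j i.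
Proof. by apply/matrixP=> k l; rewrite !mxE rmorph_nat andbC. Qed.

Lemma adjmx_delta_mul_entry m n (W : 'M[C]_(m, n)) i j k l :
  (adjmx W *m delta_mx i j *m W) k l = (W i k)^* * W j l.
Proof.
rewrite -(mul_delta_mx (0 : 'I_1)) mulmxA -colE -mulmxA -rowE.
by rewrite mxE big_ord1 !mxE.
Qed.

Lemma phi_H0E (X : 'M[C]_2) : phi_H0 X = X 0 0.
Proof. exact: mxtrace_delta_mul. Qed.

Lemma E_HO_entry (Y : 'M[C]_(2 * 2)) i j :
  E_HO Y i j = Y (mxtens_index (i, i)) (mxtens_index (j, j)).
Proof.
rewrite /E_HO mxE (bigD1 (mxtens_index (j, j))) //= big1 => [|l /negbTE lj].
  rewrite addr0 !mxE eqxx mulr1 (bigD1 (mxtens_index (i, i))) //=.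
  rewrite big1 => [|l /negbTE li].
    by rewrite !mxE eqxx conjC1 mul1r addr0.
  by rewrite !mxE li conjC0 mul0r.
by rewrite [X in _ * X]mxE lj mulr0.
Qed.

Lemma E_HO_tens (A B : 'M[C]_2) : E_HO (A *t B) = map2_mx *%R A B.
Proof. by apply/matrixP=> i j; rewrite E_HO_entry tensmxE mxE. Qed.

Lemma E_H_tens (theta : R) (A B : 'M[C]_2) :
  E_H theta (A *t B) = B 0 0 *: (adjmx (Uth theta) *m A *m Uth theta).
Proof.
rewrite /E_H /V_H (adjmx_tens (Uth theta) (ket0 R)).
rewrite (tensmx_mul (adjmx (Uth theta)) (adjmx (ket0 R)) A B).
rewrite (tensmx_mul (adjmx (Uth theta) *m A) (adjmx (ket0 R) *m B) (Uth theta) (ket0 R)).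
have -> : adjmx (ket0 R) *m B *m ket0 R = (B 0 0)%:M.
  by rewrite [LHS]mx11_scalar adjmx_delta -rowE -colE !mxE.
by rewrite tens_mx_scalar castmx_id.
Qed.

Lemma varphi_HO_eff0 (theta : R) :
  varphi_HO theta (@eff_a R) (@eff_b R) 0 = (Uth theta 0 0)^* * Uth theta 0 0.
Proof.
rewrite /varphi_HO /= /Fblock phi_H0E E_H_tens E_HO_tens.
have -> : map2_mx *%R (eff_a R 0) (eff_b R 0) = delta_mx 0 0.
  by apply/matrixP=> i j; rewrite !mxE -natrM mulnb andb_idl // => /andP[/eqP-> /eqP->].
by rewrite mxE adjmx_delta_mul_entry mxE mul1r.
Qed.

Lemma psi_HO_eff0 (theta : R) :
  psi_HO theta (@eff_a R) (@eff_b R) 0 =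
    \sum_(k < 2) (Uth theta k 0)^* * Uth theta k 0.
Proof.
rewrite /psi_HO /= /Gblock phi_H0E E_HO_tens mxE E_H_tens mulmx1 !mxE eqxx mul1r mulr1.
by apply: eq_bigr => k _; rewrite !mxE.
Qed.

Lemma Uth_offdiag (theta : R) i j :
  i != j -> Uth theta i j = - ('i * (sin (theta / 2))%:C).
Proof. by move=> /negbTE ij; rewrite !mxE ij mulr0n mulr0 sub0r mulr1. Qed.

Lemma Uth_offdiag_neq0 (theta : R) i j :
  0 < `|theta| < pi -> i != j -> Uth theta i j != 0.
Proof.
move=> theta_range ij; rewrite Uth_offdiag // oppr_eq0 mulf_neq0 //.
  by rewrite eq_complex /= oner_eq0 andbF.
rewrite fmorph_eq0 sin_neq0 // normf_div normr_nat.
by move: theta_range => /andP[? ?]; apply/andP; split; lra.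
Qed.

End QubitHQMM.

Theorem mainTheorem1 (R : realType) (theta : R) :
  0 < `|theta| < pi ->
  exists n : nat,
    varphi_HO theta (@eff_a R) (@eff_b R) n <> psi_HO theta (@eff_a R) (@eff_b R) n.
Proof.
move=> theta_range; exists 0%N.
rewrite varphi_HO_eff0 psi_HO_eff0 big_ord_recl big_ord1 -[X in X = _]addr0.
move=> /addrI/esym/eqP; rewrite mulf_eq0 conjC_eq0 orbb.
by apply/negP/Uth_offdiag_neq0; rewrite // eq_sym neq_lift.
Qed.
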